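(* Let $k$ be any field and $d$ a positive integer. For every $u\in k_0\langle X\rangle$, $[S_d(x_1,\ldots,x_d),u]\in R_1^{(d)}$.
   Context: $X=\{x_1,x_2,\ldots\}$ is a countably infinite set and $k_0\langle X\rangle$ is the free associative $k$-algebra (without identity) on $X$. A $T$-space is a $k$-linear subspace closed under every algebra endomorphism of $k_0\langle X\rangle$; the $T$-space generated by a subset is the smallest $T$-space containing it. $S_d(v_1,\ldots,v_d)=\sum_{\sigma\in\Sigma_d}\prod_{i=1}^d v_{\sigma(i)}$, and $R_1^{(d)}$ is the $T$-space generated by $S_d(x_1,\ldots,x_d)$. $[a,b]=ab-ba$. *)

From HB Require Import structures.
From mathcomp Require Import all_boot all_order all_algebra all_fingroup.
From mathcomp Require Import monalg.
Set Implicit Arguments. Unset Strict Implicit. Unset Printing Implicit Defensive.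
Import GRing.Theory.
Local Open Scope ring_scope.

(* k<X> : the free associative unital k-algebra on X = {x_i | i : nat},
   realised as the monoid algebra of the free monoid {fmonom nat}
   (words over nat, concatenation). *)
Definition freeAlg (k : fieldType) := {malg k[{fmonom nat}]}.

Definition xvar (k : fieldType) (i : nat) : freeAlg k := << @fmu nat i >>.

(* k_0<X> : the non-unital free algebra on X, i.e. the span of the nonempty
   words = the elements of k<X> whose coefficient at the empty word is 0. *)
Definition emptyword : {fmonom nat} := FMonom [::].
Definition in_free0 (k : fieldType) (p : freeAlg k) : Prop := p@_emptyword = 0.

(* Algebra endomorphisms of k_0<X> (k-linear, multiplicative maps
   k_0<X> -> k_0<X>), given as maps on k<X> whose behaviour is only
   constrained on k_0<X>. *)
Definition is_endo0 (k : fieldType) (phi : freeAlg k -> freeAlg k) : Prop :=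
  [/\ (forall p, in_free0 p -> in_free0 (phi p)),
      (forall (a : k) p q, in_free0 p -> in_free0 q ->
          phi (a *: p + q) = a *: phi p + phi q) &
      (forall p q, in_free0 p -> in_free0 q -> phi (p * q) = phi p * phi q)].

Definition is_Tspace (k : fieldType) (V : freeAlg k -> Prop) : Prop :=
  [/\ (forall p, V p -> in_free0 p),
      V 0,
      (forall (a : k) p q, V p -> V q -> V (a *: p + q)) &
      (forall phi, is_endo0 phi -> forall p, V p -> V (phi p))].

Definition Tspace_gen (k : fieldType) (S : freeAlg k -> Prop) (v : freeAlg k) : Prop :=
  forall V, is_Tspace V -> (forall p, S p -> V p) -> V v.

(* S_d(v_1,...,v_d) = sum_{sigma in Sigma_d} prod_{i=1}^d v_{sigma(i)}
   (ordered product, indices shifted to 'I_d = {0,...,d-1}). *)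
Definition Spoly (k : fieldType) (d : nat) (v : 'I_d -> freeAlg k) : freeAlg k :=
  \sum_(s : 'S_d) \prod_(i < d) v (s i).

Definition Sd (k : fieldType) (d : nat) : freeAlg k :=
  Spoly (fun i : 'I_d => xvar k i.+1).

Definition R1 (k : fieldType) (d : nat) : freeAlg k -> Prop :=
  Tspace_gen (fun p => p = Sd k d).

Definition comm (k : fieldType) (a b : freeAlg k) : freeAlg k := a * b - b * a.

(* For a word w_0 ... w_(n-1), the commutator (w_0 ... w_(n-1)) u - u (w_0 ... w_(n-1))
   telescopes into the sum over positions p of w_0 ... (w_p u) ... w_(n-1) minus
   w_0 ... (u w_p) ... w_(n-1): the p-th term moves u from just left of w_p to just
   right of it.  Summing over the orderings of x_1, ..., x_d gives
     [S_d(x_1,...,x_d), u] = sum_j S_d(..., x_j u, ...) - S_d(..., u x_j, ...),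
   and every S_d(g_1, ..., g_d) with g_i in k_0<X> lies in R_1^(d), being the image of
   S_d(x_1, ..., x_d) under the endomorphism x_i |-> g_i. *)

From HB Require Import structures.
From mathcomp Require Import all_boot all_order all_algebra all_fingroup.
From mathcomp Require Import monalg.
Set Implicit Arguments. Unset Strict Implicit. Unset Printing Implicit Defensive.
Import GRing.Theory.
Local Open Scope ring_scope.

Definition map_at (A : Type) n (v : 'I_n -> A) (j : 'I_n) (f : A -> A) (i : 'I_n) : A :=
  if i == j then f (v i) else v i.

Lemma sum_map_at_commr (A : pzRingType) n (w : 'I_n -> A) (u : A) :
  \sum_(p < n) (\prod_(i < n) map_at w p ( *%R^~ u) i - \prod_(i < n) map_at w p ( *%R u) i)
  = (\prod_(i < n) w i) * u - u * \prod_(i < n) w i.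
Proof.
rewrite /map_at; elim: n w => [|n IHn] w; first by rewrite !big_ord0 mul1r mulr1 subrr.
pose wid := widen_ord (leqnSn n).
have wid_max (i : 'I_n) : (wid i == ord_max) = false by rewrite -val_eqE /= ltn_eqF.
have insert_max (f : 'I_n.+1 -> A) :
    \prod_(i < n.+1) (if i == ord_max then f i else w i)
    = (\prod_(i < n) w (wid i)) * f ord_max.
  by rewrite big_ord_recr eqxx; congr (_ * _); apply: eq_bigr => i _; rewrite wid_max.
have insert_wid (f : 'I_n.+1 -> A) (p : 'I_n) :
    \prod_(i < n.+1) (if i == wid p then f i else w i)
    = (\prod_(i < n) (if i == p then f (wid i) else w (wid i))) * w ord_max.
  by rewrite big_ord_recr /= eq_sym wid_max.
rewrite big_ord_recr /=.
under eq_bigr => p _ do rewrite !insert_wid -mulrBl.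
rewrite !insert_max -mulr_suml (IHn (fun i => w (wid i))) big_ord_recr /=.
by rewrite mulrBl !mulrA addrC addrA subrK.
Qed.

Lemma commr_sum_perm_prod (A : pzRingType) d (v : 'I_d -> A) (u : A) :
  (\sum_(s : 'S_d) \prod_(i < d) v (s i)) * u - u * \sum_(s : 'S_d) \prod_(i < d) v (s i)
  = \sum_(j < d) (\sum_(s : 'S_d) \prod_(i < d) map_at v j ( *%R^~ u) (s i)
                 - \sum_(s : 'S_d) \prod_(i < d) map_at v j ( *%R u) (s i)).
Proof.
rewrite mulr_suml mulr_sumr -sumrB.
under [RHS]eq_bigr => j _ do rewrite -sumrB.
rewrite exchange_big /=; apply: eq_bigr => s _.
rewrite -(sum_map_at_commr (fun i => v (s i))) [RHS](reindex_inj (@perm_inj _ s)) /=.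
by apply: eq_bigr => p _; rewrite /map_at; congr (_ - _); apply: eq_bigr => i _;
  rewrite (inj_eq perm_inj).
Qed.

Section NonunitalFreeAlgebra.
Variable k : fieldType.
Implicit Types p q : freeAlg k.

Lemma in_free0E p : in_free0 p = (p@_(mone : {fmonom nat}) = 0).
Proof. by rewrite /in_free0 /emptyword -fmoneE. Qed.

Lemma in_free0_mull p q : in_free0 p -> in_free0 (p * q).
Proof. by rewrite !in_free0E rmorphM /= => ->; rewrite mul0r. Qed.

Lemma in_free0_mulr p q : in_free0 q -> in_free0 (p * q).
Proof. by rewrite !in_free0E rmorphM /= => ->; rewrite mulr0. Qed.

Lemma in_free0_xvar i : in_free0 (xvar k i).
Proof. by rewrite in_free0E mcoeffU fm1_eq1. Qed.

End NonunitalFreeAlgebra.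

Lemma mul_malgCr (K : monomType) (R : comNzRingType) (c : R) (g : {malg R[K]}) :
  g * c%:MP = c *: g.
Proof.
rewrite malgM_def malgZ_def fgmulgU /fgscale.
by apply: eq_bigr => m _; rewrite mulrC mulm1.
Qed.

Section Substitution.
Variables (k : fieldType) (F : nat -> freeAlg k).

Definition subst_word (m : {fmonom nat}) : freeAlg k := \prod_(i <- (m : seq nat)) F i.

Lemma subst_word_is_mmorphism : mmorphism subst_word.
Proof. by split=> [m1 m2|]; rewrite /subst_word ?fmM ?big_cat // fm1 big_nil. Qed.

HB.instance Definition _ :=
  isMultiplicative.Build {fmonom nat} (freeAlg k) subst_word subst_word_is_mmorphism.

Definition subst : freeAlg k -> freeAlg k := mmap (@malgC _ k) subst_word.

HB.instance Definition _ := GRing.Additive.copy subst (mmap (@malgC _ k) subst_word).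

Lemma subst_is_multiplicative : multiplicative subst.
Proof.
by apply: commr_mmap_is_multiplicative => p m m'; rewrite /GRing.comm mul_malgC mul_malgCr.
Qed.

HB.instance Definition _ :=
  GRing.isMultiplicative.Build (freeAlg k) (freeAlg k) subst subst_is_multiplicative.

Lemma substZ (a : k) p : subst (a *: p) = a *: subst p.
Proof. by rewrite /subst mmapZ mul_malgC. Qed.

Lemma subst_xvar i : subst (xvar k i) = F i.
Proof. by rewrite /subst /xvar mmapU /= /subst_word fmU big_seq1 mpolyC1E mul1r. Qed.

Lemma subst_Spoly d (v : 'I_d -> freeAlg k) :
  subst (Spoly v) = Spoly (fun i => subst (v i)).
Proof. by rewrite rmorph_sum; apply: eq_bigr => s _; rewrite rmorph_prod. Qed.

Hypothesis F_free0 : forall i, in_free0 (F i).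

Lemma in_free0_subst_word m : m != mone -> in_free0 (subst_word m).
Proof.
case: m => [[|i s]] nonempty; first by rewrite -fmoneE eqxx in nonempty.
by rewrite /subst_word big_cons; apply: in_free0_mull.
Qed.

Lemma in_free0_subst p : in_free0 p -> in_free0 (subst p).
Proof.
rewrite !in_free0E => p0; rewrite /subst mmapE raddf_sum big1 // => m _.
rewrite /= mcoeffCM; have [->|nonempty] := eqVneq m mone; first by rewrite p0 mul0r.
by move/in_free0_subst_word: nonempty; rewrite in_free0E => ->; rewrite mulr0.
Qed.

Lemma subst_is_endo0 : is_endo0 subst.
Proof.
split=> [|a p q _ _|p q _ _]; first exact: in_free0_subst.
  by rewrite rmorphD /= substZ.
exact: rmorphM.
Qed.

End Substitution.

Section GeneratedTspace.
Variables (k : fieldType) (S : freeAlg k -> Prop).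
Implicit Types p q : freeAlg k.

Lemma Tspace_gen_base p : S p -> Tspace_gen S p.
Proof. by move=> Sp V _; apply. Qed.

Lemma Tspace_gen_endo0 (phi : freeAlg k -> freeAlg k) p :
  is_endo0 phi -> Tspace_gen S p -> Tspace_gen S (phi p).
Proof.
by move=> endo_phi Sp V TV SV; case: (TV) => _ _ _ endo_closed; apply: endo_closed (Sp V TV SV).
Qed.

Lemma Tspace_gen_lin (a : k) p q :
  Tspace_gen S p -> Tspace_gen S q -> Tspace_gen S (a *: p + q).
Proof.
by move=> Sp Sq V TV SV; case: (TV) => _ _ lin _; apply: lin; [apply: Sp | apply: Sq].
Qed.

Lemma Tspace_genB p q : Tspace_gen S p -> Tspace_gen S q -> Tspace_gen S (p - q).
Proof. by move=> Sp Sq; rewrite addrC -scaleN1r; apply: Tspace_gen_lin. Qed.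

Lemma Tspace_gen_sum (I : Type) (r : seq I) (P : pred I) (F : I -> freeAlg k) :
  (forall i, P i -> Tspace_gen S (F i)) -> Tspace_gen S (\sum_(i <- r | P i) F i).
Proof.
move=> SF; apply: big_ind => //; first by move=> V [].
by move=> p q Sp Sq; rewrite -[p]scale1r; apply: Tspace_gen_lin.
Qed.

End GeneratedTspace.

Lemma R1_Spoly (k : fieldType) d (g : 'I_d -> freeAlg k) :
  (forall i, in_free0 (g i)) -> @R1 k d (Spoly g).
Proof.
move=> g_free0.
pose F n := if n is m.+1 then (if insub m is Some i then g i else 0) else 0.
have F_free0 n : in_free0 (F n).
  have free0_0 : in_free0 (0 : freeAlg k) by rewrite in_free0E raddf0.
  by case: n => [|m] //=; case: insub.
have -> : Spoly g = subst F (Sd k d).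
  rewrite subst_Spoly; apply: eq_bigr => s _; apply: eq_bigr => i _.
  by rewrite subst_xvar /F valK.
by apply: Tspace_gen_endo0; [exact: subst_is_endo0 | exact: Tspace_gen_base].
Qed.

Theorem corollary2p1 (k : fieldType) (d : nat) (hd : (0 < d)%N)
    (u : freeAlg k) (hu : in_free0 u) :
  @R1 k d (comm (Sd k d) u).
Proof.
rewrite /comm /Sd (commr_sum_perm_prod (fun i : 'I_d => xvar k i.+1)).
apply: Tspace_gen_sum => j _; apply: Tspace_genB; apply: R1_Spoly => i;
  have := in_free0_xvar k i.+1; rewrite /map_at; case: ifP => _ x_free0;
  by [apply: in_free0_mull | apply: in_free0_mulr | ].
Qed.
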